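(* A connected graph $G$ is well-bicovered with $b(G)=2$ if and only if $G=K_n$ for some $n\ge 2$.
   Context: All graphs are finite and simple; ''subgraph'' means induced subgraph. $b(G)$ denotes the maximum order of an induced bipartite subgraph of $G$. $G$ is well-bicovered if every vertex-inclusion-maximal induced bipartite subgraph of $G$ has the same order. *)

From mathcomp Require Import all_boot.
Set Implicit Arguments. Unset Strict Implicit. Unset Printing Implicit Defensive.

Definition simple_graph (T : finType) (e : rel T) : Prop :=
  symmetric e /\ irreflexive e.

Definition induced_bipartite (T : finType) (e : rel T) (S : {set T}) : Prop :=
  exists A : {set T}, A \subset S /\
    (forall x y, x \in A -> y \in A -> ~~ e x y) /\
    (forall x y, x \in S :\: A -> y \in S :\: A -> ~~ e x y).

Definition maximal_bipartite (T : finType) (e : rel T) (S : {set T}) : Prop :=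
  induced_bipartite e S /\
  forall S' : {set T}, S \proper S' -> ~ induced_bipartite e S'.

Definition is_b (T : finType) (e : rel T) (k : nat) : Prop :=
  (exists S : {set T}, induced_bipartite e S /\ #|S| = k) /\
  (forall S : {set T}, induced_bipartite e S -> #|S| <= k).

Definition well_bicovered (T : finType) (e : rel T) : Prop :=
  forall S1 S2 : {set T}, maximal_bipartite e S1 -> maximal_bipartite e S2 ->
    #|S1| = #|S2|.

Definition connected_graph (T : finType) (e : rel T) : Prop :=
  0 < #|T| /\ forall x y : T, connect e x y.

(* G is (isomorphic to) K_n: all distinct vertices adjacent; n = #|T|. *)
Definition is_complete (T : finType) (e : rel T) : Prop :=
  forall x y : T, x != y -> e x y.

From mathcomp Require Import all_boot.
Set Implicit Arguments. Unset Strict Implicit.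

(* In K_n every independent set has at most one vertex, so every induced
   bipartite subgraph has at most two; as any two vertices form one, all
   maximal ones have exactly two vertices.  Conversely, if b(G) = 2 and two
   distinct vertices x, y of a connected G were non-adjacent, a neighbour z of
   x would give the induced bipartite subgraph {x, y, z} of order 3. *)

Definition independent (T : finType) (e : rel T) (A : {set T}) : Prop :=
  forall x y, x \in A -> y \in A -> ~~ e x y.

Section InducedBipartite.

Variables (T : finType) (e : rel T).
Hypothesis e_irr : irreflexive e.

Lemma card_le1_independent (A : {set T}) : #|A| <= 1 -> independent e A.
Proof. by move=> /card_le1_eqP A_le1 x y xA yA; rewrite (A_le1 x y xA yA) e_irr. Qed.

Lemma induced_bipartite_setU1 (z : T) (A : {set T}) :
  independent e A -> induced_bipartite e (z |: A).
Proof.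
move=> indA; exists A; split; first exact: subsetUr.
split=> //; apply: card_le1_independent.
by rewrite setDUl setDv setU0 (leq_trans (subset_leq_card (subsetDl _ _))) ?cards1.
Qed.

Lemma induced_bipartite_card_le2 (S : {set T}) :
  #|S| <= 2 -> induced_bipartite e S.
Proof.
case: (set_0Vmem S) => [-> _|[z zS] S_le2].
  by exists set0; rewrite sub0set setD0; split=> //; split=> x y; rewrite in_set0.
rewrite -(setD1K zS); apply/induced_bipartite_setU1/card_le1_independent.
by move: S_le2; rewrite (cardsD1 z S) zS.
Qed.

End InducedBipartite.

Section Complete.

Variables (T : finType) (e : rel T).
Hypothesis e_complete : is_complete e.

Lemma complete_card_le1_independent (A : {set T}) : independent e A -> #|A| <= 1.
Proof.
move=> indA; rewrite leqNgt; apply/card_gt1P => -[x [y [xA yA xy]]].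
by move: (indA x y xA yA); rewrite e_complete.
Qed.

Lemma complete_induced_bipartite_card_le2 (S : {set T}) :
  induced_bipartite e S -> #|S| <= 2.
Proof.
move=> [A [AS [indA indSA]]]; rewrite -(cardsID A S) (setIidPr AS).
exact: (leq_add (complete_card_le1_independent indA)
                (complete_card_le1_independent indSA)).
Qed.

Hypothesis e_irr : irreflexive e.
Hypothesis T_ge2 : 2 <= #|T|.

Lemma complete_maximal_bipartite_card (S : {set T}) :
  maximal_bipartite e S -> #|S| = 2.
Proof.
move=> [bipS S_max]; apply/eqP; rewrite eqn_leq complete_induced_bipartite_card_le2 //=.
rewrite ltnNge; apply/negP => S_lt2.
have [w wS] : exists w, w \notin S.
  apply/existsP; rewrite -negb_forall; apply: contraTN S_lt2 => /forallP S_full.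
  by rewrite -ltnNge (_ : S = setT) ?cardsT //; apply/setP => w; rewrite inE S_full.
apply: (S_max (w |: S)); first by rewrite properUr // sub1set.
by apply: induced_bipartite_card_le2; rewrite // cardsU1 wS.
Qed.

Lemma complete_is_b2 : is_b e 2.
Proof.
split; last exact: complete_induced_bipartite_card_le2.
have [x [y [_ _ xy]]] : exists x y, [/\ x \in T, y \in T & x != y].
  by apply/card_gt1P; rewrite cardT -cardE.
exists [set x; y]; rewrite cards2 xy.
by split=> //; apply: induced_bipartite_card_le2; rewrite // cards2 xy.
Qed.

End Complete.

Lemma connect_neighbour (T : finType) (e : rel T) (x y : T) :
  x != y -> connect e x y -> exists z, e x z.
Proof.
move=> xy /connectP [[|z p] /= xp yl]; first by rewrite yl eqxx in xy.
by exists z; case/andP: xp.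
Qed.

Lemma connected_bipartite_le2_complete (T : finType) (e : rel T) :
  simple_graph e -> (forall x y, connect e x y) ->
  (forall S, induced_bipartite e S -> #|S| <= 2) -> is_complete e.
Proof.
move=> [e_sym e_irr] e_conn bip_le2 x y xy; apply/negPn/negP => nxy.
have [z xz] := connect_neighbour xy (e_conn x y).
have zx : z != x by apply: contraTneq xz => ->; rewrite e_irr.
have zy : z != y by apply: contraTneq xz => ->; rewrite (negbTE nxy).
have indxy : independent e [set x; y].
  move=> u v; rewrite !inE => /orP [] /eqP -> /orP [] /eqP ->;
    by rewrite ?e_irr // e_sym.
have := bip_le2 _ (induced_bipartite_setU1 e_irr z indxy).
by rewrite cardsU1 cards2 xy !inE negb_or zx zy.
Qed.

Theorem mainTheorem7 (T : finType) (e : rel T) :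
  simple_graph e -> connected_graph e ->
  ((well_bicovered e /\ is_b e 2) <-> (is_complete e /\ 2 <= #|T|)).
Proof.
move=> e_simple [_ e_conn]; have [_ e_irr] := e_simple; split.
- move=> [_ [[S [_ S2]] bip_le2]]; split; last by rewrite -S2 max_card.
  exact: connected_bipartite_le2_complete.
- move=> [e_complete T_ge2]; split; last exact: complete_is_b2.
  by move=> S1 S2 /complete_maximal_bipartite_card -> // /complete_maximal_bipartite_card ->.
Qed.
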